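(* Let $0<L<M$, $\mathcal{M}=\left]L,M\right[$, and let $\mu$ be a non-atomic finite Borel measure on $[L,M]$ with total mass $\mu([L,M])=M-L$. Then there exists a constant $C_0>0$ such that for every $u\in\mathcal{D}(\mathcal{M})$, $$\|u\|_{L^2_\mu(\mathcal{M})}\le C_0\,\Big\|x\,\frac{\partial u}{\partial x}\Big\|_{L^2(\mathcal{M})}.$$
   Context: $\mathcal{D}(\mathcal{M})$ is the space of smooth functions with compact support in $\mathcal{M}$; $\|u\|_{L^2_\mu(\mathcal{M})}=(\int_L^M u^2\,d\mu)^{1/2}$ and $\|\cdot\|_{L^2(\mathcal{M})}$ is the $L^2$ norm for Lebesgue measure on $\mathcal{M}$. *)

From mathcomp Require Import all_boot all_order all_algebra.
From mathcomp Require Import all_classical all_reals all_analysis.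
Set Implicit Arguments. Unset Strict Implicit. Unset Printing Implicit Defensive.
Import Order.TTheory GRing.Theory Num.Theory.
Import numFieldNormedType.Exports.
Local Open Scope classical_set_scope.
Local Open Scope ring_scope.

Definition is_atom (R : realType) (mu : {measure set R -> \bar R}) (A : set R) :=
  [/\ measurable A, (0 < mu A)%E &
     forall B, measurable B -> B `<=` A -> mu B = 0%E \/ mu (A `\` B) = 0%E].

Definition non_atomic (R : realType) (mu : {measure set R -> \bar R}) :=
  forall A, ~ is_atom mu A.

Definition smooth (R : realType) (u : R -> R) :=
  forall (n : nat) (x : R), derivable (derive1n n u) x 1.

(* u belongs to D(]L,M[) : smooth, with compact support contained in ]L,M[
   (u is identified with its extension by zero to R). *)
Definition test_function (R : realType) (L M : R) (u : R -> R) :=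
  [/\ smooth u,
      compact (closure [set x | u x != 0]) &
      closure [set x | u x != 0] `<=` `]L, M[ ].

Definition L2mu_norm (R : realType) (mu : {measure set R -> \bar R}) (L M : R)
    (u : R -> R) : \bar R :=
  poweR (\int[mu]_(x in `]L, M[) ((u x) ^+ 2)%:E)%E (2^-1).

Definition L2_norm (R : realType) (L M : R) (f : R -> R) : \bar R :=
  poweR (\int[lebesgue_measure]_(x in `]L, M[) ((f x) ^+ 2)%:E)%E (2^-1).

From mathcomp Require Import all_boot all_order all_algebra.
From mathcomp Require Import all_classical all_reals all_analysis.
From mathcomp Require Import ring lra measurable_realfun.
Set Implicit Arguments.
Unset Strict Implicit.
Unset Printing Implicit Defensive.

Import Order.TTheory GRing.Theory Num.Theory.
Import numFieldNormedType.Exports.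
Local Open Scope classical_set_scope.
Local Open Scope ring_scope.

(** Since u vanishes at L, the fundamental theorem of calculus and x >= L
   give |u x| <= L^-1 int_L^M |t u'(t)| dt, which by Cauchy-Schwarz is at most
   L^-1 (M - L)^(1/2) ||x u'||.  Squaring and integrating against mu, whose
   mass on ]L,M[ is at most M - L, yields the inequality with C0 = (M - L)/L.
   Cauchy-Schwarz is obtained in its AM-GM form: |u x| <= A/e + e B for all
   e > 0 forces (u x)^2 <= 4 A B. *)

Section real_inequalities.
Variable R : realType.

Lemma normr_le_amgm (L t y e : R) : 0 < L -> L <= t -> 0 < e ->
  `|y| <= (2 * L * e)^-1 + e / (2 * L) * (t * y) ^+ 2.
Proof.
move=> L_gt0 Lt e_gt0.
have t_gt0 : 0 < t by exact: lt_le_trans Lt.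
set z := `|t * y|.
have Lyz : L * `|y| <= z by rewrite /z normrM (gtr0_norm t_gt0) ler_wpM2r.
have -> : (t * y) ^+ 2 = z ^+ 2 by rewrite /z real_normK ?num_real.
have amgm : 2 * z * e <= 1 + (e * z) ^+ 2.
  by have := sqr_ge0 (e * z - 1); rewrite sqrrB; lra.
have -> : (2 * L * e)^-1 + e / (2 * L) * z ^+ 2 = (1 + (e * z) ^+ 2) / (2 * L * e).
  by field; rewrite ?gt_eqF.
rewrite ler_pdivlMr ?mulr_gt0 //; nra.
Qed.

Lemma sqr_le_of_amgm (U A B : R) : 0 <= A -> 0 <= B ->
  (forall e, 0 < e -> `|U| <= A / e + e * B) -> U ^+ 2 <= 4 * A * B.
Proof.
move=> A_ge0 B_ge0 amgm; rewrite -real_normK ?num_real //.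
have [->|U_neq0] := eqVneq U 0; first by rewrite normr0 expr0n /= !mulr_ge0.
have V_gt0 : 0 < `|U| by rewrite normr_gt0.
have [B0|B_neq0] := eqVneq B 0.
  have e_gt0 : 0 < 2 * (A + 1) / `|U| by rewrite !divr_gt0 ?mulr_gt0 ?ltr_wpDl.
  have := amgm _ e_gt0; rewrite B0 mulr0 addr0.
  have -> : A / (2 * (A + 1) / `|U|) = `|U| * (A / (2 * (A + 1))).
    by field; rewrite ?gt_eqF ?ltr_wpDl.
  have : A / (2 * (A + 1)) < 1.
    by rewrite ltr_pdivrMr ?mulr_gt0 ?ltr_wpDl //; lra.
  nra.
have {}B_gt0 : 0 < B by rewrite lt_def B_neq0 B_ge0.
have e_gt0 : 0 < `|U| / (2 * B) by rewrite divr_gt0 ?mulr_gt0.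
have := amgm _ e_gt0.
have -> : A / (`|U| / (2 * B)) + `|U| / (2 * B) * B = 2 * A * B / `|U| + `|U| / 2.
  by field; rewrite ?gt_eqF.
move=> /(ler_wpM2r (ltW V_gt0)); rewrite mulrDl divfK ?gt_eqF // expr2; nra.
Qed.

Lemma poweR_half_le (S : \bar R) (c k : R) : (0 <= S)%E -> 0 <= c -> 0 <= k ->
  (S <= (c ^+ 2 * k)%:E)%E -> (S `^ 2^-1 <= c%:E * k%:E `^ 2^-1)%E.
Proof.
move=> S_ge0 c_ge0 k_ge0 Sck.
apply: le_trans (gt0_ler_poweR _ _ _ Sck) _; rewrite ?invr_ge0 //.
- by rewrite in_itv /= S_ge0 leey.
- by rewrite in_itv /= lee_fin leey mulr_ge0 ?sqr_ge0.
rewrite !poweR_EFin -EFinM lee_fin !powR12_sqrt ?mulr_ge0 ?sqr_ge0 //.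
by rewrite sqrtrM ?sqr_ge0 // sqrtr_sqr ger0_norm.
Qed.

End real_inequalities.

Lemma integral_sqr_ge0 (R : realType) (d : measure_display) (T : measurableType d)
    (mu : {measure set T -> \bar R}) (D : set T) (f : T -> R) :
  (0 <= \int[mu]_(x in D) (f x ^+ 2)%:E)%E.
Proof. by apply: integral_ge0 => x _; rewrite lee_fin sqr_ge0. Qed.

Lemma derivable1_continuous (R : realType) (f : R -> R) :
  (forall x, derivable f x 1) -> continuous f.
Proof.
by move=> df x; apply/differentiable_continuous; rewrite -derivable1_diffP.
Qed.

Lemma integral_derive1 (R : realType) (u : R -> R) (a b : R) : a < b ->
  (forall x, derivable u x 1) -> continuous (derive1 u) ->
  (\int[lebesgue_measure]_(x in `[a, b]) (derive1 u x)%:E = (u b - u a)%:E)%E.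
Proof.
move=> ab du cu'; have cu := derivable1_continuous du.
rewrite EFinB; apply: continuous_FTC2 => //.
- exact: continuous_subspaceT.
- split; first by move=> t _; exact: du.
  + exact: cvg_at_right_filter (cu a).
  + exact: cvg_at_left_filter (cu b).
Qed.

Section weighted_energy_bound.
Variables (R : realType) (L M : R) (u : R -> R).
Hypotheses (L_gt0 : 0 < L) (LM : L < M).
Hypotheses (u_derivable : forall x, derivable u x 1) (u'_cont : continuous (derive1 u)).
Hypothesis uL : u L = 0.
Variable k : R.
Hypothesis energy :
  (\int[lebesgue_measure]_(x in `]L, M[) ((x * derive1 u x) ^+ 2)%:E)%E = k%:E.

Let weight_measurable (D : set R) : measurable_fun D (fun x => (x * derive1 u x) ^+ 2).
Proof.
apply/measurable_funX/measurable_funM; first exact: measurable_id.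
by apply: measurable_funTS; exact: continuous_measurable_fun.
Qed.

Lemma integral_affine_energy (a b : R) : 0 <= a -> 0 <= b ->
  (\int[lebesgue_measure]_(x in `]L, M[) (a + b * (x * derive1 u x) ^+ 2)%:E)%E =
  (a * (M - L) + b * k)%:E.
Proof.
move=> a_ge0 b_ge0.
under eq_integral do rewrite EFinD EFinM.
rewrite ge0_integralD //; first last.
- by apply/measurable_EFinP; apply: measurable_funM => //; exact: weight_measurable.
- by move=> x _; rewrite lee_fin mulr_ge0 ?sqr_ge0.
rewrite integral_cst // ge0_integralZl //; first last.
- by move=> x _; rewrite lee_fin sqr_ge0.
- by apply/measurable_EFinP; exact: weight_measurable.
have mLM : lebesgue_measure (`]L, M[ : set R) = (M - L)%:E.
  by rewrite lebesgue_measure_itv /= lte_fin LM -EFinB.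
(* integral_cst states the measure of ]L, M[ on the sigma-algebra generated
   by intervals, whose structure matches that of mLM only up to conversion. *)
rewrite energy; set m := (X in (_ * X + _)%E).
by have -> : m = (M - L)%:E by exact: mLM.
Qed.

Lemma normr_le_energy (x : R) : L < x -> x < M -> forall e, 0 < e ->
  `|u x| <= (M - L) / (2 * L) / e + e * (k / (2 * L)).
Proof.
move=> Lx xM e e_gt0.
set a := (2 * L * e)^-1; set b := e / (2 * L).
have a_ge0 : 0 <= a by rewrite invr_ge0 !mulr_ge0 ?ltW.
have b_ge0 : 0 <= b by rewrite divr_ge0 ?mulr_ge0 ?ltW.
have -> : (M - L) / (2 * L) / e + e * (k / (2 * L)) = a * (M - L) + b * k.
  by rewrite /a /b; field; rewrite ?gt_eqF.
set g := fun t => a + b * (t * derive1 u t) ^+ 2.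
have mg (D : set R) : measurable_fun D (fun t => (g t)%:E).
  apply/measurable_EFinP; apply: measurable_funD => //.
  by apply: measurable_funM => //; exact: weight_measurable.
have g_ge0 t : 0 <= g t by rewrite /g addr_ge0 // mulr_ge0 // sqr_ge0.
rewrite -lee_fin -(integral_affine_energy a_ge0 b_ge0) -/g.
rewrite -abse_EFin -[u x]subr0 -uL -(integral_derive1 Lx u_derivable u'_cont).
apply: le_trans (le_abse_integral _ _ _) _ => //.
  by apply/measurable_EFinP; apply: measurable_funTS; exact: continuous_measurable_fun.
apply: (@le_trans _ _ (\int[lebesgue_measure]_(t in `[L, x]) (g t)%:E)%E).
  under eq_integral do rewrite abse_EFin.
  apply: ge0_le_integral => //.
  - apply/measurable_EFinP.
    have cu' : continuous (fun t => `|derive1 u t|).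
      by move=> t; apply: continuous_comp; [exact: u'_cont | exact: norm_continuous].
    by apply: measurable_funTS; exact: continuous_measurable_fun.
  - exact: mg.
  - move=> t; rewrite /= in_itv /= => /andP[Lt _]; rewrite lee_fin.
    exact: normr_le_amgm.
rewrite -(@integral_itv_bndoo _ L M _ true false); last exact: mg.
apply: ge0_subset_integral => //.
- exact: mg.
- by move=> t _; rewrite lee_fin.
- by move=> t; rewrite /= !in_itv /= => /andP[-> tx]; exact: le_trans tx (ltW xM).
Qed.

Let energy_ge0 : 0 <= k.
Proof. by rewrite -lee_fin -energy integral_sqr_ge0. Qed.

Lemma sqr_le_energy (x : R) : L < x -> x < M -> u x ^+ 2 <= (M - L) / L ^+ 2 * k.
Proof.
move=> Lx xM.
have A_ge0 : 0 <= (M - L) / (2 * L) by rewrite divr_ge0 ?mulr_ge0 ?subr_ge0 ?ltW.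
have B_ge0 : 0 <= k / (2 * L) by rewrite divr_ge0 ?energy_ge0 ?mulr_ge0 ?ltW.
have -> : (M - L) / L ^+ 2 * k = 4 * ((M - L) / (2 * L)) * (k / (2 * L)).
  by field; rewrite gt_eqF.
exact: sqr_le_of_amgm A_ge0 B_ge0 (normr_le_energy Lx xM).
Qed.

Lemma integral_sqr_le_energy (mu : {measure set R -> \bar R}) :
  (mu `]L, M[%classic <= (M - L)%:E)%E ->
  (\int[mu]_(x in `]L, M[) (u x ^+ 2)%:E <= (((M - L) / L) ^+ 2 * k)%:E)%E.
Proof.
move=> mu_mass; set c := (M - L) / L ^+ 2 * k.
have c_ge0 : 0 <= c by rewrite mulr_ge0 ?energy_ge0 ?divr_ge0 ?sqr_ge0 ?subr_ge0 ?ltW.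
apply: (@le_trans _ _ (\int[mu]_(x in `]L, M[) c%:E)%E).
  apply: ge0_le_integral => //.
  - by move=> t _; rewrite lee_fin sqr_ge0.
  - apply/measurable_EFinP; apply: measurable_funX; apply: measurable_funTS.
    by apply: continuous_measurable_fun; exact: derivable1_continuous.
  - by move=> t; rewrite /= in_itv /= => /andP[Lt tM]; rewrite lee_fin sqr_le_energy.
rewrite integral_cst // (_ : ((M - L) / L) ^+ 2 * k = c * (M - L)); last first.
  by rewrite /c; field; rewrite gt_eqF.
by rewrite (EFinM c) lee_pmul.
Qed.

End weighted_energy_bound.

Section test_functions.
Variables (R : realType) (L M : R) (u : R -> R).

Lemma smooth_derivable : smooth u -> forall x, derivable u x 1.
Proof. by move=> u_smooth; exact: (u_smooth 0%N). Qed.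

Lemma smooth_continuous_derive1 : smooth u -> continuous (derive1 u).
Proof. by move=> u_smooth; apply: derivable1_continuous; exact: (u_smooth 1%N). Qed.

Lemma test_function_vanishes_at_left : test_function L M u -> u L = 0.
Proof.
case=> _ _ u_supp; apply/eqP; apply: contraT => uL_neq0.
have := u_supp L (@subset_closure _ [set x | u x != 0] L uL_neq0).
by rewrite /= in_itv /= ltxx.
Qed.

End test_functions.

Theorem mainTheorem5 (R : realType) (L M : R) (mu : {measure set R -> \bar R}) :
  0 < L -> L < M ->
  mu (~` `[L, M]%classic) = 0%E ->
  mu `[L, M]%classic = (M - L)%:E ->
  non_atomic mu ->
  exists C0 : R, 0 < C0 /\
    forall u : R -> R, test_function L M u ->
      (L2mu_norm mu L M u <= C0%:E * L2_norm L M (fun x => x * derive1 u x)%R)%E.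
Proof.
move=> L_gt0 LM _ mu_mass _.
have mu_itv : (mu `]L, M[%classic <= (M - L)%:E)%E.
  rewrite -mu_mass le_measure ?inE // => x /=.
  by rewrite !in_itv /= => /andP[/ltW -> /ltW ->].
have C0_gt0 : 0 < (M - L) / L by rewrite divr_gt0 ?subr_gt0.
exists ((M - L) / L); split=> // u u_test.
have uL := test_function_vanishes_at_left u_test.
case: u_test => u_smooth _ _.
have u_derivable := smooth_derivable u_smooth.
have u'_cont := smooth_continuous_derive1 u_smooth.
rewrite /L2mu_norm /L2_norm /=.
case energy : (\int[lebesgue_measure]_(x in `]L, M[) ((x * derive1 u x) ^+ 2)%:E)%E
  => [k| |].
- have k_ge0 : 0 <= k by rewrite -lee_fin -energy integral_sqr_ge0.
  apply: poweR_half_le; rewrite ?integral_sqr_ge0 ?(ltW C0_gt0) //.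
  exact: (integral_sqr_le_energy L_gt0 LM u_derivable u'_cont uL energy mu_itv).
- by rewrite poweRyr ?gt0_muley ?leey // invr_eq0 pnatr_eq0.
- by have := integral_sqr_ge0 lebesgue_measure `]L, M[ (fun x => x * derive1 u x); rewrite energy.
Qed.
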